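(* Let $\mathcal{C}$ be an optimum distance flag code of type $(t_1,\ldots,t_r)$ on $\mathbb{F}_q^n$. Then for every $i\in\{1,\ldots,r\}$ the $i$-projected code $\mathcal{C}_i$ satisfies $d_S(\mathcal{C}_i)=\min\{2t_i,2(n-t_i)\}$.
   Context: $q$ is a prime power, $n>1$. For subspaces $\mathcal{U},\mathcal{V}$ of $\mathbb{F}_q^n$, $d_S(\mathcal{U},\mathcal{V})=\dim(\mathcal{U}+\mathcal{V})-\dim(\mathcal{U}\cap\mathcal{V})$; for a set $\mathcal{D}$ of subspaces, $d_S(\mathcal{D})$ is the minimum of $d_S$ over pairs of distinct elements (and $d_S(\mathcal{D})=0$ if $|\mathcal{D}|=1$). A flag of type $(t_1,\ldots,t_r)$, $0<t_1<\cdots<t_r<n$, is a tuple $(\mathcal{F}_1,\ldots,\mathcal{F}_r)$ of nested subspaces $\mathcal{F}_1\subsetneq\cdots\subsetneq\mathcal{F}_r$ of $\mathbb{F}_q^n$ with $\dim\mathcal{F}_i=t_i$. A flag code of that type is a set of at least two such flags; its distance $d_f(\mathcal{C})$ is the minimum over distinct $\mathcal{F},\mathcal{F}'\in\mathcal{C}$ of $\sum_{i=1}^r d_S(\mathcal{F}_i,\mathcal{F}'_i)$. The code is an optimum distance flag code if $d_f(\mathcal{C})= 2\left(\sum_{t_i \leq \lfloor n/2\rfloor} t_i + \sum_{t_i > \lfloor n/2\rfloor} (n-t_i)\right)$. The $i$-projected code is $\mathcal{C}_i=\{\mathcal{F}_i : (\mathcal{F}_1,\ldots,\mathcal{F}_r)\in\mathcal{C}\}$.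 *)

From HB Require Import structures.
From mathcomp Require Import all_boot all_order all_algebra.
Set Implicit Arguments. Unset Strict Implicit. Unset Printing Implicit Defensive.
Import GRing.Theory.
Local Open Scope ring_scope.

(* Ambient space F_q^n is 'rV[F]_n, F a finite field (q = #|F| a prime power). *)
Definition subsp (F : finFieldType) (n : nat) := {vspace 'rV[F]_n}.

Definition dS (F : finFieldType) (n : nat) (U V : subsp F n) : nat :=
  (\dim (U + V)%VS - \dim (U :&: V)%VS)%N.

(* Minimum of a list of naturals (0 for the empty list). *)
Definition seq_min (s : seq nat) : nat := foldr minn (head 0%N s) s.

(* d_S(D): minimum over pairs of distinct elements; 0 if D has one element. *)
Definition dS_set (F : finFieldType) (n : nat) (D : seq (subsp F n)) : nat :=
  seq_min [seq dS p.1 p.2 | p <- [seq (U, V) | U <- D, V <- D] & p.1 != p.2].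

Definition flag (F : finFieldType) (n r : nat) := {ffun 'I_r -> subsp F n}.

Definition is_flag_type (n r : nat) (t : 'I_r -> nat) : Prop :=
  (forall i : 'I_r, 0 < t i < n)%N /\ (forall i j : 'I_r, (i < j)%N -> (t i < t j)%N).

Definition is_flag_of_type (F : finFieldType) (n r : nat) (t : 'I_r -> nat)
    (f : flag F n r) : Prop :=
  (forall i : 'I_r, \dim (f i) = t i) /\
  (forall i j : 'I_r, (i < j)%N -> (f i <= f j)%VS /\ f i != f j).

(* A flag code of type t: a set (duplicate-free list) of at least two flags of type t. *)
Definition is_flag_code (F : finFieldType) (n r : nat) (t : 'I_r -> nat)
    (C : seq (flag F n r)) : Prop :=
  uniq C /\ (1 < size C)%N /\ (forall f, f \in C -> is_flag_of_type t f).

Definition flag_dist (F : finFieldType) (n r : nat) (f g : flag F n r) : nat :=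
  (\sum_(i < r) dS (f i) (g i))%N.

Definition code_dist (F : finFieldType) (n r : nat) (C : seq (flag F n r)) : nat :=
  seq_min [seq flag_dist p.1 p.2 | p <- [seq (f, g) | f <- C, g <- C] & p.1 != p.2].

Definition optimum_bound (n r : nat) (t : 'I_r -> nat) : nat :=
  (2 * ((\sum_(i < r | t i <= n./2) t i) + (\sum_(i < r | n./2 < t i) (n - t i))))%N.

Definition is_optimum_distance_flag_code (F : finFieldType) (n r : nat)
    (t : 'I_r -> nat) (C : seq (flag F n r)) : Prop :=
  is_flag_code t C /\ code_dist C = optimum_bound n t.

Definition proj_code (F : finFieldType) (n r : nat) (C : seq (flag F n r)) (i : 'I_r)
  : seq (subsp F n) := undup [seq (f : flag F n r) i | f <- C].

From HB Require Import structures.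
From mathcomp Require Import all_boot all_order all_algebra.
From mathcomp Require Import zify.

Set Implicit Arguments.
Unset Strict Implicit.
Unset Printing Implicit Defensive.

(* For two [k]-dimensional subspaces, [dim (U + V) <= min (2k, n)] and
   [dim (U :&: V) = 2k - dim (U + V)], so [d_S(U, V) <= min (2k, 2(n - k))].
   The optimum distance bound is exactly the sum of these maxima over the
   components of a flag; a code attaining it must therefore attain the maximum
   in every component for every pair of distinct flags, which pins down the
   distance of each projected code. *)

Lemma foldr_minn_mem (a : nat) (s : seq nat) : foldr minn a s \in a :: s.
Proof.
elim: s => [|y s IHs] /=; first exact: mem_head.
rewrite /minn; case: ltnP => _; first by rewrite !inE eqxx orbT.
by move: IHs; rewrite !inE => /orP [->|->]; rewrite ?orbT.
Qed.

Lemma seq_min_mem (s : seq nat) : s != [::] -> seq_min s \in s.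
Proof.
case: s => // y s _; have := foldr_minn_mem y (y :: s).
by rewrite /seq_min /= !inE => /orP [->|].
Qed.

Lemma seq_min_le (s : seq nat) x : x \in s -> (seq_min s <= x)%N.
Proof.
rewrite /seq_min; elim: s (head 0%N s) => // y s IHs a.
by rewrite inE /= geq_min => /orP [/eqP ->|/IHs ->]; rewrite ?leqnn ?orbT.
Qed.

Lemma seq_min_const (s : seq nat) c x :
  x \in s -> {in s, forall y, y = c} -> seq_min s = c.
Proof. by case: s => // y s _ s_c; apply/s_c/seq_min_mem. Qed.

Lemma leq_sum_eq (I : finType) (E1 E2 : I -> nat) :
  (forall i, E1 i <= E2 i)%N -> (\sum_i E2 i <= \sum_i E1 i)%N ->
  forall i, E1 i = E2 i.
Proof.
move=> le_E12 le_sum21 i.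
have /(@leqif_sum I predT) le_sum : forall j, predT j ->
    (E1 j <= E2 j ?= iff (E1 j == E2 j))%N by move=> j _; exact: leqif_eq.
move: le_sum => [le_sum12 /esym]; rewrite eqn_leq le_sum12 le_sum21.
by move=> /forallP /(_ i) /eqP.
Qed.

Section SubspaceDistance.

Variables (F : finFieldType) (n : nat).
Implicit Types U V : subsp F n.

Lemma dSvv U : dS U U = 0%N.
Proof. by rewrite /dS addvv capvv subnn. Qed.

Lemma dS_leq U V k : \dim U = k -> \dim V = k ->
  (dS U V <= minn (2 * k) (2 * (n - k)))%N.
Proof.
move=> dimU dimV; rewrite /dS.
have sum_cap := dimv_sum_cap U V.
have := dimvS (subvf (U + V)%VS); have := dimvS (subvf U).
rewrite dimvf /dim /= mul1n dimU dimV in sum_cap * => le_kn le_sum_n.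
rewrite leq_min; apply/andP; split; lia.
Qed.

Lemma dS_set_const (D : seq (subsp F n)) c :
  (exists U V, [/\ U \in D, V \in D & U != V]) ->
  (forall U V, U \in D -> V \in D -> U != V -> dS U V = c) ->
  dS_set D = c.
Proof.
move=> [U [V [UD VD neqUV]]] dS_c; apply: (@seq_min_const _ _ (dS U V)).
  by apply/mapP; exists (U, V); rewrite // mem_filter neqUV allpairs_f.
move=> y /mapP [[U' V']]; rewrite mem_filter /= => /andP [neqUV' /allpairsP].
move=> [[U'' V''] [U''D V''D]] /= [eqU eqV] ->.
by rewrite eqU eqV in neqUV' *; apply: dS_c.
Qed.

End SubspaceDistance.

Lemma optimum_boundE (n r : nat) (t : 'I_r -> nat) :
  optimum_bound n t = (\sum_i minn (2 * t i) (2 * (n - t i)))%N.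
Proof.
rewrite /optimum_bound mulnDr !big_distrr /= [RHS](bigID (fun i => t i <= n./2)%N) /=.
have n_half := odd_double_half n; have odd_le1 : (odd n <= 1)%N by case: (odd n).
congr (_ + _)%N.
  by apply: eq_bigr => i le_t_half; apply/esym/minn_idPl; lia.
apply: eq_big => [i|i lt_half_t]; first by rewrite ltnNge.
by apply/esym/minn_idPr; lia.
Qed.

Lemma code_dist_leq (F : finFieldType) (n r : nat) (C : seq (flag F n r)) f g :
  f \in C -> g \in C -> f != g -> (code_dist C <= flag_dist f g)%N.
Proof.
move=> fC gC neq_fg; apply: seq_min_le; apply/mapP; exists (f, g) => //.
by rewrite mem_filter neq_fg allpairs_f.
Qed.

Lemma optimum_code_dS (F : finFieldType) (n r : nat) (t : 'I_r -> nat)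
    (C : seq (flag F n r)) f g :
  is_optimum_distance_flag_code t C -> f \in C -> g \in C -> f != g ->
  forall i, dS (f i) (g i) = minn (2 * t i) (2 * (n - t i)).
Proof.
move=> [[_ [_ C_type]] opt_C] fC gC neq_fg.
have [[dim_f _] [dim_g _]] := (C_type f fC, C_type g gC).
apply: leq_sum_eq => [i|]; first exact: dS_leq.
by rewrite -optimum_boundE -opt_C code_dist_leq.
Qed.

Lemma mem_proj_code (F : finFieldType) (n r : nat) (C : seq (flag F n r)) i U :
  U \in proj_code C i -> exists2 f, f \in C & U = f i.
Proof. by rewrite mem_undup => /mapP. Qed.

Lemma proj_code_map (F : finFieldType) (n r : nat) (C : seq (flag F n r)) i f :
  f \in C -> f i \in proj_code C i.
Proof. by move=> fC; rewrite mem_undup; apply: map_f. Qed.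

Lemma optimum_code_proj_neq (F : finFieldType) (n r : nat) (t : 'I_r -> nat)
    (C : seq (flag F n r)) f g i :
  (0 < t i < n)%N -> is_optimum_distance_flag_code t C ->
  f \in C -> g \in C -> f != g -> f i != g i.
Proof.
move=> t_i_range opt_C fC gC neq_fg; apply/eqP => eq_fg_i.
by have := optimum_code_dS opt_C fC gC neq_fg i; rewrite eq_fg_i dSvv; lia.
Qed.

Lemma uniq_size_gt1 (T : eqType) (s : seq T) :
  uniq s -> (1 < size s)%N -> exists x y, [/\ x \in s, y \in s & x != y].
Proof.
case: s => [|x [|y s]] //= /andP [+ _] _; rewrite inE negb_or => /andP [neq_xy _].
by exists x, y; rewrite !inE !eqxx orbT.
Qed.

Theorem proposition3p7 (F : finFieldType) (n r : nat) (t : 'I_r -> nat)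
    (C : seq (flag F n r)) :
  (1 < n)%N -> is_flag_type n t ->
  is_optimum_distance_flag_code t C ->
  forall i : 'I_r, dS_set (proj_code C i) = minn (2 * t i) (2 * (n - t i)).
Proof.
move=> _ [t_range _] opt_C i; have [[uniq_C [size_C _]] _] := opt_C.
apply: dS_set_const => [|_ _ /mem_proj_code [f fC ->] /mem_proj_code [g gC ->]].
  have [f [g [fC gC neq_fg]]] := uniq_size_gt1 uniq_C size_C.
  exists (f i), (g i); split; rewrite ?proj_code_map //.
  exact: optimum_code_proj_neq (t_range i) opt_C fC gC neq_fg.
move=> neq_fg_i; apply: (optimum_code_dS opt_C fC gC).
by apply: contra_neq neq_fg_i => ->.
Qed.
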